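(* Let $p>3$ be a prime. Then for each $k=1,2,\ldots,(p-1)/2$, $$\sum_{j=0}^{p-2k}\binom{-k}{k+j}\frac{(-1)^{k+j}}{\binom{k+j}{k}}\equiv\frac{3k}{2}\sum_{j=1}^k\frac{\binom{2j}{j}}{j}-\frac32\binom{2k}{k}\pmod p.$$
   Context: For an integer $x$ and $n\in\mathbb{N}$, $\binom{x}{n}=x(x-1)\cdots(x-n+1)/n!$ (so $\binom{-k}{n}=(-1)^n\binom{k+n-1}{n}$). Congruences between rational numbers are understood in the ring of rationals whose denominators are coprime to $p$. *)

From mathcomp Require Import all_boot all_order all_algebra.
Set Implicit Arguments. Unset Strict Implicit. Unset Printing Implicit Defensive.
Import Order.TTheory GRing.Theory Num.Theory.
Local Open Scope ring_scope.

Definition binomz (x : int) (n : nat) : rat :=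
  (\prod_(i < n) ((x - (i : nat)%:Z)%:~R : rat)) / (n`!)%:R.

Definition p_integral (p : nat) (q : rat) : bool :=
  coprime `|denq q|%N p.

(* Congruence modulo p in the ring Z_(p) of rationals whose denominators
   are coprime to p: both sides lie in Z_(p) and their difference is
   p times an element of Z_(p). *)
Definition rat_congr (p : nat) (a b : rat) : Prop :=
  [/\ p_integral p a, p_integral p b & p_integral p ((a - b) / p%:R)].

(* The j-th term on the left is k * s_k(j), where s_k(j) = (2k+j-1)! j! / (k+j)!^2,
   so the left-hand side is k * S_k with S_k = sum_{j=0}^{p-2k} s_k(j).  With the
   certificate c_k(j) = (2k+j)! j! / (k+j)!^2 one has
     s_{k+1}(j) - s_k(j+1) = 2/k * (c_k(j) - c_k(j+1)),
   so S_{k+1} - S_k telescopes to two boundary terms: the lower one is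
   3/(2k) * C(2k,k), and the upper one is p times a rational whose denominator
   k (p-k)!^2 is prime to p.  As S_1 = 1 + 1/2 + ... + 1/(p-1) = 0 mod p (pair m
   with p - m), induction gives S_k = 3/2 * sum_{j<k} C(2j,j)/j mod p, and
   multiplying by k yields the right-hand side. *)

From HB Require Import structures.
From mathcomp Require Import all_boot all_order all_algebra.
From mathcomp Require Import zify ring.

Set Implicit Arguments.
Unset Strict Implicit.
Unset Printing Implicit Defensive.
Import GRing.Theory Num.Theory.
Local Open Scope ring_scope.

Lemma p_integral_frac (p : nat) (n : int) (d : nat) :
  coprime d p -> p_integral p (n%:~R / d%:R).
Proof.
rewrite /p_integral -[d%:R]/((d%:Z)%:~R : rat).
rewrite -[coprime d p]/(coprime `|d%:Z| p).
case: divqP => [_ _ | c x _]; first exact: coprime1n.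
by apply: coprime_dvdl; rewrite abszM dvdn_mull.
Qed.

Lemma p_integral_subring_closed (p : nat) : subring_closed (p_integral p).
Proof.
have frac x : x = (numq x)%:~R / `|denq x|%:R.
  by rewrite -[LHS]divq_num_den -absz_denq.
have den_neq0 x : `|denq x|%:R != 0 :> rat.
  by rewrite pnatr_eq0 absz_eq0 denq_neq0.
split=> [|x y|x y]; rewrite ?unfold_in /=; first exact: coprime1n.
- move=> px py; rewrite (frac x) (frac y).
  have -> : (numq x)%:~R / `|denq x|%:R - (numq y)%:~R / `|denq y|%:R =
      (numq x * `|denq y|%:Z - numq y * `|denq x|%:Z)%:~R
        / (`|denq x| * `|denq y|)%N%:R :> rat.
    by rewrite intrB !intrM natrM; field; rewrite !den_neq0.
  by apply: p_integral_frac; rewrite coprimeMl px py.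
- move=> px py; rewrite (frac x) (frac y).
  have -> : (numq x)%:~R / `|denq x|%:R * ((numq y)%:~R / `|denq y|%:R) =
      (numq x * numq y)%:~R / (`|denq x| * `|denq y|)%N%:R :> rat.
    by rewrite intrM natrM; field; rewrite !den_neq0.
  by apply: p_integral_frac; rewrite coprimeMl px py.
Qed.

HB.instance Definition _ (p : nat) :=
  GRing.isSubringClosed.Build rat (p_integral p) (p_integral_subring_closed p).

Section RatCongr.
Variable p : nat.

Lemma rat_congrE a b : rat_congr p a b =
  [/\ a \in p_integral p, b \in p_integral p & (a - b) / p%:R \in p_integral p].
Proof. by []. Qed.

Lemma rat_congr_refl a : a \in p_integral p -> rat_congr p a a.
Proof. by move=> pa; rewrite rat_congrE; split; rewrite // subrr mul0r rpred0. Qed.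

Lemma rat_congrD a b c d :
  rat_congr p a b -> rat_congr p c d -> rat_congr p (a + c) (b + d).
Proof.
rewrite !rat_congrE => -[pa pb pab] [pc pd pcd]; split; try exact: rpredD.
by rewrite opprD addrACA mulrDl rpredD.
Qed.

Lemma rat_congrMl c a b :
  c \in p_integral p -> rat_congr p a b -> rat_congr p (c * a) (c * b).
Proof.
rewrite !rat_congrE => pc [pa pb pab]; split; try exact: rpredM.
by rewrite -mulrBr -mulrA rpredM.
Qed.

Lemma rat_congr_mulp0 w :
  p != 0%N -> w \in p_integral p -> rat_congr p (p%:R * w) 0.
Proof.
move=> p_neq0 pw; rewrite rat_congrE subr0 [_ / _]mulrC mulKf ?pnatr_eq0 //.
by split; rewrite ?rpred0 ?rpredM ?rpred_nat.
Qed.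

End RatCongr.

Section PrimeDenominators.
Variables (p : nat) (p_prime : prime p).

Lemma coprime_lt_prime n : (0 < n < p)%N -> coprime n p.
Proof.
by case/andP=> n_gt0 n_lt_p; rewrite coprime_sym prime_coprime // gtnNdvd.
Qed.

Lemma coprime_fact_lt_prime n : (n < p)%N -> coprime n`! p.
Proof.
elim: n => [|n IHn] n_lt_p; first exact: coprime1n.
by rewrite factS coprimeMl coprime_lt_prime ?IHn ?(ltnW n_lt_p).
Qed.

Lemma p_integral_invn n : (0 < n < p)%N -> n%:R^-1 \in p_integral p.
Proof.
by move=> /coprime_lt_prime /(p_integral_frac 1); rewrite div1r.
Qed.

Lemma p_integral_invfact n : (n < p)%N -> n`!%:R^-1 \in p_integral p.
Proof.
by move=> /coprime_fact_lt_prime /(p_integral_frac 1); rewrite div1r.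
Qed.

Lemma harmonic_congr0 : (2 < p)%N -> rat_congr p (\sum_(1 <= m < p) m%:R^-1) 0.
Proof.
move=> p_gt2.
set H := \sum_(1 <= m < p) _.
have H_rev : H = \sum_(1 <= m < p) (p - m)%:R^-1.
  by rewrite /H big_nat_rev; apply: eq_big_nat => m _; rewrite add1n subSS.
have pair m : (1 <= m < p)%N ->
    m%:R^-1 + (p - m)%:R^-1 = p%:R * (m%:R^-1 * (p - m)%:R^-1) :> rat.
  case/andP=> m_gt0 m_lt_p; rewrite natrB ?(ltnW m_lt_p) //.
  have m_neq0 : m%:R != 0 :> rat by rewrite pnatr_eq0 -lt0n.
  have pm_neq0 : p%:R - m%:R != 0 :> rat.
    by rewrite -natrB ?(ltnW m_lt_p) // pnatr_eq0 subn_eq0 -ltnNge.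
  by field; rewrite m_neq0 pm_neq0.
have -> : H = p%:R * (2%:R^-1 * \sum_(1 <= m < p) (m%:R^-1 * (p - m)%:R^-1)).
  have -> : H = 2%:R^-1 * (H + H) by field.
  rewrite {2}H_rev /H -big_split /= [RHS]mulrCA [in RHS]mulr_sumr.
  by congr (_ * _); apply: eq_big_nat => m /pair.
apply: rat_congr_mulp0; first by rewrite -lt0n prime_gt0.
rewrite rpredM ?p_integral_invn // big_nat_cond.
by apply: rpred_sum => m /andP[m_range _]; rewrite rpredM ?p_integral_invn //; lia.
Qed.

End PrimeDenominators.

Lemma natr_fact_neq0 (R : numDomainType) n : n`!%:R != 0 :> R.
Proof. by rewrite pnatr_eq0 -lt0n fact_gt0. Qed.

Lemma natr_bin_fact (R : numFieldType) n m : (m <= n)%N ->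
  'C(n, m)%:R = n`!%:R / (m`!%:R * (n - m)`!%:R) :> R.
Proof.
move=> le_mn; rewrite -(bin_fact le_mn) !natrM mulfK //.
by rewrite mulf_neq0 ?natr_fact_neq0.
Qed.

Lemma binomzS x n : binomz x n.+1 = binomz x n * (x - n%:Z)%:~R / n.+1%:R.
Proof.
rewrite /binomz big_ord_recr factS natrM /=.
by field; rewrite nat1r pnatr_eq0 natr_fact_neq0.
Qed.

Lemma binomz_oppz k n : binomz (- k%:Z) n = (-1) ^+ n * 'C((n + k).-1, n)%:R.
Proof.
elim: n => [|n IHn]; first by rewrite /binomz big_ord0 bin0 expr0 mul1r.
have bin_succ : 'C(n + k, n.+1)%:R = (n + k)%:R * 'C((n + k).-1, n)%:R / n.+1%:R :> rat.
  by rewrite -natrM mul_bin_diag natrM; field; rewrite nat1r pnatr_eq0.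
rewrite binomzS IHn addSn /= bin_succ exprS intrB intrN -!pmulrn natrD.
by field; rewrite nat1r pnatr_eq0.
Qed.

Definition summand (k j : nat) : rat :=
  (k + k + j).-1`!%:R * j`!%:R / (k + j)`!%:R ^+ 2.

Definition certificate (k j : nat) : rat :=
  (k + k + j)`!%:R * j`!%:R / (k + j)`!%:R ^+ 2.

Lemma binomz_oppz_summand k j : (0 < k)%N ->
  binomz (- k%:Z) (k + j) * (-1) ^+ (k + j) / 'C(k + j, k)%:R = k%:R * summand k j.
Proof.
case: k => // k _.
rewrite binomz_oppz [_ * (-1) ^+ _]mulrAC -exprD addnn -signr_odd odd_double.
rewrite mul1r /summand addnAC [in LHS]natr_bin_fact; last lia.
rewrite natr_bin_fact ?leq_addr // addKn.
have -> : ((k.+1 + k.+1 + j).-1 - (k.+1 + j) = k)%N by lia.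
by rewrite factS natrM; field; rewrite !natr_fact_neq0 nat1r pnatr_eq0.
Qed.

Lemma summand_telescope k j : (0 < k)%N ->
  summand k.+1 j - summand k j.+1 = 2 / k%:R * (certificate k j - certificate k j.+1).
Proof.
case: k => // k _.
rewrite /summand /certificate !(addSn, addnS) /= !factS !natrM.
by field; rewrite natr_fact_neq0 -!natrD !nat1r !pnatr_eq0.
Qed.

Lemma summand_lower_boundary k : (0 < k)%N ->
  2 / k%:R * certificate k 0 - summand k 0 = 3 / 2 / k%:R * 'C(2 * k, k)%:R.
Proof.
case: k => // k _; rewrite /summand /certificate mul2n -addnn.
rewrite natr_bin_fact ?leq_addr // addnK !addn0 !(addSn, addnS) /= !factS fact0 !natrM.
by field; rewrite natr_fact_neq0 nat1r pnatr_eq0.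
Qed.

Lemma summand_upper_boundary k j : (0 < k)%N ->
  summand k j.+1 + 2 / k%:R * certificate k j =
  (k + k + j).+1%:R * ((k + k + j)`!%:R * j`!%:R * (k + j.*2 + 2)%:R
                        / (k%:R * (k + j).+1`!%:R ^+ 2)).
Proof.
case: k => // k _.
rewrite /summand /certificate -addnn !(addSn, addnS) /= !factS !natrM.
by field; rewrite natr_fact_neq0 -!natrD !nat1r !pnatr_eq0.
Qed.

Lemma summand1 j : summand 1 j = j.+1%:R^-1.
Proof.
rewrite /summand add1n /= factS natrM.
by field; rewrite natr_fact_neq0 !nat1r !pnatr_eq0.
Qed.

Lemma sum_summand_succ k n : (0 < k)%N ->
  \sum_(0 <= j < n.+1) summand k.+1 j =
    \sum_(0 <= j < n.+3) summand k j
    + (2 / k%:R * certificate k 0 - summand k 0)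
    - (summand k n.+2 + 2 / k%:R * certificate k n.+1).
Proof.
move=> k_gt0.
have step j : summand k.+1 j =
    summand k j.+1 + 2 / k%:R * (certificate k j - certificate k j.+1).
  by rewrite -summand_telescope // addrC subrK.
under eq_bigr do rewrite step.
rewrite big_split /= -mulr_sumr sumrB.
rewrite [X in _ * (X - _)]big_nat_recl // [X in _ * (_ - X)]big_nat_recr //=.
rewrite [in RHS]big_nat_recl // [in RHS]big_nat_recr //=.
by ring.
Qed.

Section MainCongruence.
Variables (p : nat) (p_prime : prime p).

Lemma sum_summand_congr k : (0 < k)%N -> (2 * k < p)%N ->
  rat_congr p (\sum_(0 <= j < (p - 2 * k).+1) summand k j)
              (3 / 2 * \sum_(1 <= j < k) 'C(2 * j, j)%:R / j%:R).
Proof.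
elim: k => [//|k IHk] _ lt_2k_p.
have [-> | k_gt0] := posnP k.
  have -> : \sum_(0 <= j < (p - 2 * 1).+1) summand 1 j = \sum_(1 <= m < p) m%:R^-1.
    rewrite -[1%N in RHS]add0n big_addn (_ : (p - 2 * 1).+1 = p - 1)%N; last lia.
    by apply: eq_bigr => j _; rewrite summand1 addn1.
  by rewrite [X in _ * X]big_geq // mulr0; apply: harmonic_congr0; lia.
set n := (p - 2 * k.+1)%N.
have p_eq : p = (k + k + n.+1).+1 by lia.
have /(IHk k_gt0) IH : (2 * k < p)%N by lia.
rewrite (_ : p - 2 * k = n.+2)%N in IH; last lia.
rewrite sum_summand_succ // summand_upper_boundary // -p_eq.
rewrite summand_lower_boundary // [in X in rat_congr _ _ X]big_nat_recr //= mulrDr.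
rewrite (_ : 3 / 2 * ('C(2 * k, k)%:R / k%:R) = 3 / 2 / k%:R * 'C(2 * k, k)%:R);
  last by ring.
set lower := 3 / 2 / k%:R * _; set w := _ / (k%:R * _).
have Nw_int : - w \in p_integral p.
  rewrite rpredN /w invfM -exprVn !rpredM ?rpredX ?rpred_nat //;
    by rewrite ?p_integral_invfact ?p_integral_invn //; lia.
have lower_int : lower \in p_integral p.
  by rewrite /lower !rpredM ?rpred_nat ?p_integral_invn //; lia.
have p_neq0 : p != 0%N by rewrite -lt0n prime_gt0.
have := rat_congrD IH
  (rat_congrD (rat_congr_refl lower_int) (rat_congr_mulp0 p_neq0 Nw_int)).
by rewrite addr0 mulrN addrA.
Qed.

End MainCongruence.

Theorem lemma2p4 (p k : nat) :
  prime p -> (3 < p)%N -> (1 <= k <= (p - 1) %/ 2)%N ->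
  rat_congr p
    (\sum_(0 <= j < (p - 2 * k).+1)
        binomz (- (k%:Z)) (k + j) * (-1) ^+ (k + j) / ('C(k + j, k))%:R)
    ((3 * k)%:R / 2 * (\sum_(1 <= j < k.+1) ('C(2 * j, j))%:R / j%:R)
       - 3%:R / 2 * ('C(2 * k, k))%:R).
Proof.
move=> p_prime _ /andP[k_gt0]; rewrite leq_divRL // => le_2k_p.
rewrite [X in rat_congr _ _ X]
  (_ : _ = k%:R * (3 / 2 * \sum_(1 <= j < k) 'C(2 * j, j)%:R / j%:R)).
  under eq_bigr => j _ do rewrite binomz_oppz_summand //.
  rewrite -mulr_sumr; apply: rat_congrMl; first exact: rpred_nat.
  by apply: sum_summand_congr => //; lia.
by rewrite big_nat_recr //= natrM; field; rewrite pnatr_eq0 -lt0n.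
Qed.
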